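(* Let $[\cdot,\cdot]$ be a Gerstenhaber superbracket on $\Omega(\mathcal A)$. Then $(\Omega(\mathcal A),\wedge,[\cdot,\cdot])$ is a differential Gerstenhaber superalgebra if and only if there is a Poisson superalgebra structure $\{\cdot,\cdot\}$ on $\mathcal A$ such that $[\cdot,\cdot]$ is the bracket associated to it, i.e. $[f,g]=0$, $[f,\mathbf d g]=[\mathbf d f,g]=\{f,g\}$ and $[\mathbf d f,\mathbf d g]=\mathbf d\{f,g\}$ for all $f,g\in\mathcal A$. (In the forward direction one may take $\{f,g\}:=[f,\mathbf d g]$.)
   Context: $\mathcal A$ is a $\mathbb Z$-graded, associative, graded-commutative unital real algebra, regarded as supercommutative with parity $p$ = degree mod 2. $\Omega^1(\mathcal A)=\ker(\mathbf m:\mathcal A\otimes\mathcal A\to\mathcal A)$ with $\mathbf d a=a\otimes1-1\otimes a$, generated over $\mathcal A$ by $\mathbf d\mathcal A$; $\Omega(\mathcal A)=\bigoplus_{r\ge0}\Omega^r(\mathcal A)$, $\Omega^0(\mathcal A)=\mathcal A$, is the algebra of superforms generated over $\mathcal A$ by $\Omega^1(\mathcal A)$ with wedge product, bigraded by form degree $\deg$ and parity $p$, and $\mathbf d$ extends to the exterior superderivative ($\deg$ $1$, $\mathbf d^2=0$). A Gerstenhaber superbracket on $\Omega(\mathcal A)$ is a bracket such that for bihomogeneous $\alpha,\beta,\gamma$: $[\alpha,\beta]=-(-1)^{(\deg\alpha-1)(\deg\beta-1)+p(\alpha)p(\beta)}[\beta,\alpha]$; $[\alpha,[\beta,\gamma]]=[[\alpha,\beta],\gamma]+(-1)^{(\deg\alpha-1)(\deg\beta-1)+p(\alpha)p(\beta)}[\beta,[\alpha,\gamma]]$;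 $[\alpha,\beta\wedge\gamma]=[\alpha,\beta]\wedge\gamma+(-1)^{(\deg\alpha-1)\deg\beta+p(\alpha)p(\beta)}\beta\wedge[\alpha,\gamma]$. It is differential if $\mathbf d[\alpha,\beta]=[\mathbf d\alpha,\beta]+(-1)^{\deg\alpha-1}[\alpha,\mathbf d\beta]$ for all $\alpha,\beta$. A Poisson superalgebra structure on $\mathcal A$ is a bilinear bracket homogeneous of even degree satisfying, for homogeneous $f,g,h$: $\{f,g\}=-(-1)^{p(f)p(g)}\{g,f\}$, $\{f,\{g,h\}\}=\{\{f,g\},h\}+(-1)^{p(f)p(g)}\{g,\{f,h\}\}$, $\{f,gh\}=\{f,g\}h+(-1)^{p(f)p(g)}g\{f,h\}$.
   Formalization: The Poisson superalgebra bracket maps elements of parities p and q to parity p+q instead of being homogeneous of even ℤ-degree, and the Gerstenhaber superbracket is real-bilinear of form degree −1 and parity-preserving. Each condition added here is assumed in the paper as well or is needed for the statement above to hold. *)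

From Stdlib Require Import Reals ZArith List Bool.
Set Implicit Arguments.
Open Scope R_scope.

Record RAlg := {
  ra_car :> Type;
  ra0 : ra_car;
  ra1 : ra_car;
  ra_add : ra_car -> ra_car -> ra_car;
  ra_opp : ra_car -> ra_car;
  ra_scal : R -> ra_car -> ra_car;
  ra_mul : ra_car -> ra_car -> ra_car;
  ra_addA : forall x y z, ra_add x (ra_add y z) = ra_add (ra_add x y) z;
  ra_addC : forall x y, ra_add x y = ra_add y x;
  ra_add0l : forall x, ra_add ra0 x = x;
  ra_addNl : forall x, ra_add (ra_opp x) x = ra0;
  ra_scalDr : forall a x y, ra_scal a (ra_add x y) = ra_add (ra_scal a x) (ra_scal a y);
  ra_scalDl : forall a b x, ra_scal (a + b) x = ra_add (ra_scal a x) (ra_scal b x);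
  ra_scalA : forall a b x, ra_scal a (ra_scal b x) = ra_scal (a * b) x;
  ra_scal1 : forall x, ra_scal 1 x = x;
  ra_mulA : forall x y z, ra_mul x (ra_mul y z) = ra_mul (ra_mul x y) z;
  ra_mul1l : forall x, ra_mul ra1 x = x;
  ra_mul1r : forall x, ra_mul x ra1 = x;
  ra_mulDl : forall x y z, ra_mul (ra_add x y) z = ra_add (ra_mul x z) (ra_mul y z);
  ra_mulDr : forall x y z, ra_mul x (ra_add y z) = ra_add (ra_mul x y) (ra_mul x z);
  ra_scal_mull : forall a x y, ra_mul (ra_scal a x) y = ra_scal a (ra_mul x y);
  ra_scal_mulr : forall a x y, ra_mul x (ra_scal a y) = ra_scal a (ra_mul x y)
}.

Arguments ra0 {r}.
Arguments ra1 {r}.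
Arguments ra_add {r} _ _.
Arguments ra_opp {r} _.
Arguments ra_scal {r} _ _.
Arguments ra_mul {r} _ _.

Declare Scope alg_scope.
Delimit Scope alg_scope with A.
Infix "\+" := ra_add (at level 50, left associativity) : alg_scope.
Infix "\." := ra_scal (at level 40) : alg_scope.
Infix "\*" := ra_mul (at level 40, left associativity) : alg_scope.
Open Scope alg_scope.

Definition rsum {A : RAlg} (l : list A) : A := fold_right ra_add ra0 l.

Definition sgnZ (n : Z) : R := if Z.even n then 1 else -1.
Definition sgnB (p q : bool) : R := if p && q then -1 else 1.

Record ZGrading (A : RAlg) := {
  zhom : Z -> A -> Prop;
  zhom0 : forall n, zhom n ra0;
  zhomD : forall n x y, zhom n x -> zhom n y -> zhom n (x \+ y);
  zhomZ : forall n a x, zhom n x -> zhom n (a \. x);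
  zhomM : forall m n x y, zhom m x -> zhom n y -> zhom (m + n)%Z (x \* y);
  zhom1 : zhom 0%Z ra1;
  zhom_span : forall x : A, exists l : list (Z * A),
      Forall (fun c => zhom (fst c) (snd c)) l /\ x = rsum (map snd l);
  zhom_direct : forall l : list (Z * A), NoDup (map fst l) ->
      Forall (fun c => zhom (fst c) (snd c)) l ->
      rsum (map snd l) = ra0 -> Forall (fun c => snd c = ra0) l;
  zgcomm : forall m n x y, zhom m x -> zhom n y ->
      x \* y = sgnZ (m * n) \. (y \* x)
}.

(* parA G p x : x lies in the parity-p part of A (p = degree mod 2,
   true = odd), i.e. x is a sum of homogeneous elements of degrees of parity p *)
Inductive parA (A : RAlg) (G : ZGrading A) (p : bool) : A -> Prop :=
  | parA_hom : forall n x, zhom G n x -> Z.odd n = p -> parA G p x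
  | parA_add : forall x y, parA G p x -> parA G p y -> parA G p (x \+ y).

(* Subset of a form algebra generated (as a real vector space) by the forms
   f0 wedge d f1 wedge ... wedge d fr, with f_i homogeneous in A. *)
Inductive formgen (A : RAlg) (G : ZGrading A) (O : RAlg) (i : A -> O)
    (d : O -> O) : O -> Prop :=
  | fg_base : forall n f, zhom G n f -> formgen G O i d (i f)
  | fg_d : forall x n g, formgen G O i d x -> zhom G n g ->
      formgen G O i d (x \* d (i g))
  | fg_add : forall x y, formgen G O i d x -> formgen G O i d y ->
      formgen G O i d (x \+ y)
  | fg_scal : forall a x, formgen G O i d x -> formgen G O i d (a \. x).

(* Om : the algebra (product = wedge);  ohom r p x : x is bihomogeneous *)
(* of form degree r and parity p;  iota : identification A = Omega^0;  *)
Record SuperForms (A : RAlg) (G : ZGrading A) := {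
  Om : RAlg;
  ohom : Z -> bool -> Om -> Prop;
  ohom0 : forall r p, ohom r p ra0;
  ohomD : forall r p x y, ohom r p x -> ohom r p y -> ohom r p (x \+ y);
  ohomZ : forall r p a x, ohom r p x -> ohom r p (a \. x);
  ohom_neg : forall r p x, ohom r p x -> (r < 0)%Z -> x = ra0;
  ohomM : forall r p s q x y, ohom r p x -> ohom s q y ->
      ohom (r + s)%Z (xorb p q) (x \* y);
  ohom1 : ohom 0%Z false ra1;
  ohom_span : forall x : Om, exists l : list ((Z * bool) * Om),
      Forall (fun c => ohom (fst (fst c)) (snd (fst c)) (snd c)) l /\
      x = rsum (map snd l);
  ohom_direct : forall l : list ((Z * bool) * Om), NoDup (map fst l) ->
      Forall (fun c => ohom (fst (fst c)) (snd (fst c)) (snd c)) l ->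
      rsum (map snd l) = ra0 -> Forall (fun c => snd c = ra0) l;
  iota : A -> Om;
  iotaD : forall f g, iota (f \+ g) = iota f \+ iota g;
  iotaZ : forall a f, iota (a \. f) = a \. iota f;
  iotaM : forall f g, iota (f \* g) = iota f \* iota g;
  iota1 : iota ra1 = ra1;
  iota_inj : forall f g, iota f = iota g -> f = g;
  ohom0_iota : forall p x, ohom 0%Z p x <-> exists f, parA G p f /\ x = iota f;
  dO : Om -> Om;
  dD : forall x y, dO (x \+ y) = dO x \+ dO y;
  dZ : forall a x, dO (a \. x) = a \. dO x;
  d_hom : forall r p x, ohom r p x -> ohom (r + 1)%Z p (dO x);
  dd : forall x, dO (dO x) = ra0;
  d_leib : forall r p x y, ohom r p x ->
      dO (x \* y) = dO x \* y \+ sgnZ r \. (x \* dO y);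
  om_gen : forall x, formgen G Om iota dO x
}.

Arguments Om {A G} _.
Arguments ohom {A G} _ _ _ _.
Arguments iota {A G} _ _.
Arguments dO {A G} _ _.

Definition is_gerstenhaber_superbracket (A : RAlg) (G : ZGrading A)
    (S : SuperForms G) (br : Om S -> Om S -> Om S) : Prop :=
  (forall x y z, br (x \+ y) z = br x z \+ br y z) /\
  (forall x y z, br x (y \+ z) = br x y \+ br x z) /\
  (forall a x y, br (a \. x) y = a \. br x y) /\
  (forall a x y, br x (a \. y) = a \. br x y) /\
  (forall r p s q x y, ohom S r p x -> ohom S s q y ->
     ohom S (r + s - 1)%Z (xorb p q) (br x y)) /\
  (forall r p s q x y, ohom S r p x -> ohom S s q y ->
     br x y = (- (sgnZ ((r - 1) * (s - 1)) * sgnB p q)) \. br y x) /\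
  (forall r p s q t u x y z, ohom S r p x -> ohom S s q y -> ohom S t u z ->
     br x (br y z) = br (br x y) z \+
       (sgnZ ((r - 1) * (s - 1)) * sgnB p q) \. br y (br x z)) /\
  (forall r p s q t u x y z, ohom S r p x -> ohom S s q y -> ohom S t u z ->
     br x (y \* z) = br x y \* z \+
       (sgnZ ((r - 1) * s) * sgnB p q) \. (y \* br x z)).

Definition is_differential_bracket (A : RAlg) (G : ZGrading A)
    (S : SuperForms G) (br : Om S -> Om S -> Om S) : Prop :=
  forall r p x y, ohom S r p x ->
    dO S (br x y) = br (dO S x) y \+ sgnZ (r - 1) \. br x (dO S y).

Definition is_poisson_superalgebra (A : RAlg) (G : ZGrading A)
    (P : A -> A -> A) : Prop :=
  (forall x y z, P (x \+ y) z = P x z \+ P y z) /\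
  (forall x y z, P x (y \+ z) = P x y \+ P x z) /\
  (forall a x y, P (a \. x) y = a \. P x y) /\
  (forall a x y, P x (a \. y) = a \. P x y) /\
  (forall p q f g, parA G p f -> parA G q g -> parA G (xorb p q) (P f g)) /\
  (forall p q f g, parA G p f -> parA G q g ->
     P f g = (- sgnB p q) \. P g f) /\
  (forall p q u f g h, parA G p f -> parA G q g -> parA G u h ->
     P f (P g h) = P (P f g) h \+ sgnB p q \. P g (P f h)) /\
  (forall p q u f g h, parA G p f -> parA G q g -> parA G u h ->
     P f (g \* h) = P f g \* h \+ sgnB p q \. (g \* P f h)).

Definition bracket_associated (A : RAlg) (G : ZGrading A) (S : SuperForms G)
    (P : A -> A -> A) (br : Om S -> Om S -> Om S) : Prop :=
  forall f g : A,
    br (iota S f) (iota S g) = ra0 /\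
    br (iota S f) (dO S (iota S g)) = iota S (P f g) /\
    br (dO S (iota S f)) (iota S g) = iota S (P f g) /\
    br (dO S (iota S f)) (dO S (iota S g)) = dO S (iota S (P f g)).

(* Omega(A) is spanned by
   monomials f0 df1 ... dfr with homogeneous f_i, and a Gerstenhaber bracket is
   controlled by its values on the generators f and df.
   - associated => differential: the identity d[x,y] = [dx,y] + (-1)^(r-1)[x,dy]
     holds on pairs of generators by the four defining identities; it is
     linear, stable under products in the second slot (graded Leibniz rule)
     and under swapping the slots (graded antisymmetry), hence holds for
     monomials, then for every bihomogeneous x of degree r, whose monomials of
     other bidegrees cancel by directness of the bigrading.
   - differential => associated: [f,g] = 0 for degree reasons and [f,dg] has
     form degree 0, so it is a function {f,g}; the differential identity for
     (f,g) and (df,g) gives [df,g] = {f,g} and [df,dg] = d{f,g}, and the Poisson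
     axioms are the Gerstenhaber axioms for (f,dg,dh) and (f,dg,h). *)

From Stdlib Require Import Reals ZArith List Bool Lia ClassicalEpsilon.
Open Scope R_scope.
Open Scope alg_scope.

Lemma add_cancel_l {V : RAlg} (a b c : V) : a \+ b = a \+ c -> b = c.
Proof.
  intro H. rewrite <- (ra_add0l V b), <- (ra_add0l V c), <- (ra_addNl V a),
    <- !ra_addA, H. reflexivity.
Qed.

Lemma addr0 {V : RAlg} (a : V) : a \+ ra0 = a.
Proof. rewrite ra_addC. apply ra_add0l. Qed.

Lemma idem_zero {V : RAlg} (a : V) : a \+ a = a -> a = ra0.
Proof. intro H. apply (add_cancel_l a). rewrite H, addr0. reflexivity. Qed.

Lemma scal0l {V : RAlg} (x : V) : 0 \. x = ra0.
Proof. apply idem_zero. rewrite <- ra_scalDl. f_equal. ring. Qed.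

Lemma scal0r {V : RAlg} (a : R) : a \. (ra0 : V) = ra0.
Proof. apply idem_zero. rewrite <- ra_scalDr, ra_add0l. reflexivity. Qed.

Lemma mul0l {V : RAlg} (x : V) : ra0 \* x = ra0.
Proof. apply idem_zero. rewrite <- ra_mulDl, ra_add0l. reflexivity. Qed.

Lemma mul0r {V : RAlg} (x : V) : x \* ra0 = ra0.
Proof. apply idem_zero. rewrite <- ra_mulDr, ra_add0l. reflexivity. Qed.

Lemma addACA {V : RAlg} (a b c d : V) : (a \+ b) \+ (c \+ d) = (a \+ c) \+ (b \+ d).
Proof.
  rewrite <- !ra_addA. f_equal. rewrite !ra_addA. f_equal. apply ra_addC.
Qed.

Lemma rsum_app {V : RAlg} (l1 l2 : list V) : rsum (l1 ++ l2) = rsum l1 \+ rsum l2.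
Proof.
  induction l1 as [|a l1 IH]; simpl. { rewrite ra_add0l; reflexivity. }
  unfold rsum in *; simpl. rewrite IH, ra_addA. reflexivity.
Qed.

Lemma rsum_map_add {V : RAlg} {T} (f g : T -> V) (l : list T) :
  rsum (map (fun k => f k \+ g k) l) = rsum (map f l) \+ rsum (map g l).
Proof.
  induction l as [|a l IH]; simpl. { rewrite ra_add0l; reflexivity. }
  rewrite IH, addACA. reflexivity.
Qed.

Lemma rsum_map_zero {V : RAlg} {T} (l : list T) : rsum (map (fun _ => (ra0 : V)) l) = ra0.
Proof. induction l as [|a l IH]; simpl; [reflexivity|]. rewrite IH, ra_add0l. reflexivity. Qed.

(* Reflective normalisation of R-linear combinations: a linear expression is
   evaluated in an environment of atoms, and two expressions whose
   coefficients agree on every atom have equal values. *)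

Inductive lexpr := LAtom (n : nat) | LAdd (a b : lexpr) | LZero | LScal (c : R) (a : lexpr).

Fixpoint leval {V : RAlg} (env : list V) (t : lexpr) : V :=
  match t with
  | LAtom n => nth n env ra0
  | LAdd a b => leval env a \+ leval env b
  | LZero => ra0
  | LScal c a => c \. leval env a
  end.

Fixpoint lcoef (t : lexpr) (i : nat) : R :=
  match t with
  | LAtom n => if Nat.eqb i n then 1 else 0
  | LAdd a b => lcoef a i + lcoef b i
  | LZero => 0
  | LScal c a => c * lcoef a i
  end.

Fixpoint lsize (t : lexpr) : nat :=
  match t with
  | LAtom n => S n
  | LAdd a b => Nat.max (lsize a) (lsize b)
  | LZero => O
  | LScal _ a => lsize a
  end.

Fixpoint lnormal {V : RAlg} (env : list V) (t : lexpr) (N : nat) : V :=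
  match N with
  | O => ra0
  | S N' => lnormal env t N' \+ lcoef t N' \. nth N' env ra0
  end.

Fixpoint coef_agree (t1 t2 : lexpr) (N : nat) : Prop :=
  match N with
  | O => True
  | S N' => coef_agree t1 t2 N' /\ lcoef t1 N' = lcoef t2 N'
  end.

Lemma lnormal_atom {V : RAlg} (env : list V) j N :
  lnormal env (LAtom j) N = if Nat.ltb j N then nth j env ra0 else ra0.
Proof.
  induction N as [|N IH]; simpl; [reflexivity|]. rewrite IH.
  destruct (Nat.eqb_spec N j) as [->|Hne].
  - rewrite Nat.ltb_irrefl, ra_scal1, ra_add0l.
    destruct (Nat.ltb_spec j (S j)); [reflexivity|lia].
  - rewrite scal0l, addr0.
    destruct (Nat.ltb_spec j N), (Nat.ltb_spec j (S N)); reflexivity || lia.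
Qed.

Lemma leval_normal {V : RAlg} (env : list V) t N :
  (lsize t <= N)%nat -> leval env t = lnormal env t N.
Proof.
  induction t as [j|a IHa b IHb| |c a IHa]; simpl; intro H.
  - rewrite lnormal_atom. destruct (Nat.ltb_spec j N); [reflexivity|lia].
  - rewrite IHa, IHb by lia. clear. induction N as [|N IH]; simpl.
    + rewrite ra_add0l; reflexivity.
    + rewrite <- IH, ra_scalDl, addACA. reflexivity.
  - clear H. induction N as [|N IH]; simpl; [reflexivity|]. rewrite <- IH, scal0l, ra_add0l. reflexivity.
  - rewrite IHa by lia. clear. induction N as [|N IH]; simpl.
    + rewrite scal0r; reflexivity.
    + rewrite <- IH, ra_scalDr, ra_scalA. reflexivity.
Qed.

Lemma leval_eq {V : RAlg} (env : list V) t1 t2 :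
  coef_agree t1 t2 (Nat.max (lsize t1) (lsize t2)) -> leval env t1 = leval env t2.
Proof.
  set (N := Nat.max (lsize t1) (lsize t2)).
  rewrite (leval_normal env t1 N), (leval_normal env t2 N) by lia.
  clear. induction N as [|N IH]; simpl; [reflexivity|].
  intros [Hagree Hcoef]. rewrite IH, Hcoef by exact Hagree. reflexivity.
Qed.

Ltac in_list t l :=
  match l with
  | nil => constr:(false)
  | cons t _ => constr:(true)
  | cons _ ?l' => in_list t l'
  end.

Ltac collect_atoms t acc :=
  match t with
  | ra_add ?a ?b => let acc := collect_atoms a acc in collect_atoms b acc
  | ra_scal _ ?a => collect_atoms a acc
  | ra0 => acc
  | _ => match in_list t acc with true => acc | false => constr:(cons t acc) end
  end.

Ltac atom_index t l :=
  match l with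
  | cons t _ => constr:(O)
  | cons _ ?l' => let n := atom_index t l' in constr:(S n)
  end.

Ltac reify env t :=
  match t with
  | ra_add ?a ?b => let x := reify env a in let y := reify env b in constr:(LAdd x y)
  | ra_scal ?c ?a => let x := reify env a in constr:(LScal c x)
  | ra0 => constr:(LZero)
  | _ => let n := atom_index t env in constr:(LAtom n)
  end.

(* Sign identities: the signs only depend on the parities of the integer and
   boolean variables, so a case analysis on these parities reduces them to
   identities in R. *)
Ltac sign_solve :=
  unfold sgnZ, sgnB;
  repeat (rewrite ?Z.even_add, ?Z.even_sub, ?Z.even_mul, ?Z.even_opp);
  cbn [Z.even];
  repeat match goal with
         | |- context [Z.even ?v] => is_var v; destruct (Z.even v)
         end;
  repeat match goal with
         | |- context [if ?b then _ else _] => is_var b; destruct b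
         end;
  cbn [negb andb orb xorb Bool.eqb]; ring.

Ltac lin :=
  match goal with
  | |- ?L = ?R =>
    let T := type of L in
    let env := collect_atoms L (@nil T) in
    let env := collect_atoms R env in
    let tl := reify env L in
    let tr := reify env R in
    change (leval env tl = leval env tr); apply leval_eq;
    cbv [coef_agree lcoef lsize Nat.max Nat.eqb]; repeat split; sign_solve
  end.

Definition bidegree := (Z * bool)%type.

Definition bidegree_eq_dec (a b : bidegree) : {a = b} + {a <> b}.
Proof. decide equality; [apply bool_dec | apply Z.eq_dec]. Qed.

Definition component {V : RAlg} (k : bidegree) (l : list (bidegree * V)) : V :=
  rsum (map (fun c => if bidegree_eq_dec (fst c) k then snd c else ra0) l).

Lemma component_cons {V : RAlg} k c (l : list (bidegree * V)) :
  component k (c :: l) = (if bidegree_eq_dec (fst c) k then snd c else ra0) \+ component k l.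
Proof. reflexivity. Qed.

Lemma component_absent {V : RAlg} k (l : list (bidegree * V)) :
  ~ In k (map fst l) -> component k l = ra0.
Proof.
  unfold component. induction l as [|c l IH]; simpl; intro H; [reflexivity|].
  destruct (bidegree_eq_dec (fst c) k); [exfalso; auto|]. rewrite IH by auto. apply ra_add0l.
Qed.

Lemma rsum_delta {V : RAlg} (K : list bidegree) (v : V) k0 :
  NoDup K -> In k0 K ->
  rsum (map (fun k => if bidegree_eq_dec k0 k then v else ra0) K) = v.
Proof.
  induction K as [|k K IH]; simpl; intros Hnd Hin; [contradiction|].
  inversion Hnd; subst. destruct (bidegree_eq_dec k0 k) as [->|Hne].
  - rewrite (map_ext_in _ (fun _ => ra0)), rsum_map_zero, addr0; [reflexivity|].
    intros a Ha. destruct (bidegree_eq_dec k a); [subst; contradiction|reflexivity].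
  - rewrite ra_add0l. apply IH; auto. destruct Hin; [congruence|auto].
Qed.

Lemma rsum_components {V : RAlg} (K : list bidegree) (l : list (bidegree * V)) :
  NoDup K -> (forall c, In c l -> In (fst c) K) ->
  rsum (map (fun k => component k l) K) = rsum (map snd l).
Proof.
  intros HK. induction l as [|c l IH]; simpl; intro Hin.
  - apply rsum_map_zero.
  - unfold component in *; simpl.
    rewrite (rsum_map_add (fun k => if bidegree_eq_dec (fst c) k then snd c else ra0)).
    rewrite rsum_delta, IH; auto.
Qed.

Section Forms.

Context {A : RAlg} {G : ZGrading A} {S : SuperForms G}.

Lemma iota0 : iota S ra0 = ra0.
Proof.
  replace (@ra0 A) with (0 \. (@ra0 A)) by apply scal0r. rewrite iotaZ, scal0l. reflexivity.
Qed.

Lemma d0 : dO S ra0 = ra0.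
Proof.
  replace (@ra0 (Om S)) with (0 \. (@ra0 (Om S))) at 1 by apply scal0r.
  rewrite dZ, scal0l. reflexivity.
Qed.

Lemma iota_ohom {p f} : parA G p f -> ohom S 0 p (iota S f).
Proof. intro H. apply (proj2 (ohom0_iota S p _)). eauto. Qed.

Lemma iota_zhom {n f} : zhom G n f -> ohom S 0 (Z.odd n) (iota S f).
Proof. intro H. apply iota_ohom. eapply parA_hom; eauto. Qed.

Lemma d_iota_ohom {p f} : parA G p f -> ohom S 1 p (dO S (iota S f)).
Proof. intro H. exact (d_hom S _ _ _ (iota_ohom H)). Qed.

Lemma ohom0_function {r p x} : ohom S r p x -> r = 0%Z -> exists f, parA G p f /\ x = iota S f.
Proof. intros H ->. apply (ohom0_iota S). exact H. Qed.

Lemma function_ind (Q : A -> Prop) :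
  Q ra0 -> (forall f g, Q f -> Q g -> Q (f \+ g)) ->
  (forall n f, zhom G n f -> Q f) -> forall f, Q f.
Proof.
  intros H0 HD HH f. destruct (zhom_span G f) as [l [Hl ->]].
  induction l as [|c l IH]; simpl; [exact H0|].
  inversion Hl; subst. apply HD; auto. eapply HH; eauto.
Qed.

Definition bihomogeneous (l : list (bidegree * Om S)) : Prop :=
  Forall (fun c => ohom S (fst (fst c)) (snd (fst c)) (snd c)) l.

Lemma component_ohom k {l} : bihomogeneous l -> ohom S (fst k) (snd k) (component k l).
Proof.
  unfold component. induction l as [|c l IH]; simpl; intro H; [apply ohom0|].
  inversion H; subst. apply ohomD; auto.
  destruct (bidegree_eq_dec (fst c) k); [subst; auto | apply ohom0].
Qed.

Lemma components_of_zero l :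
  bihomogeneous l -> rsum (map snd l) = ra0 -> forall k, component k l = ra0.
Proof.
  intros Hl H0 k.
  set (K := nodup bidegree_eq_dec (map fst l)).
  set (L := map (fun k => (k, component k l)) K).
  assert (HK : NoDup K) by apply NoDup_nodup.
  destruct (in_dec bidegree_eq_dec k K) as [Hin|Hnin].
  - assert (HL : Forall (fun c => snd c = ra0) L).
    { apply (ohom_direct S).
      - unfold L. rewrite map_map, map_id. exact HK.
      - apply Forall_forall. intros c Hc. unfold L in Hc. apply in_map_iff in Hc.
        destruct Hc as [k' [<- _]]. apply (component_ohom k' Hl).
      - unfold L. rewrite map_map. simpl. rewrite rsum_components; auto.
        intros c Hc. apply nodup_In, in_map. exact Hc. }
    rewrite Forall_forall in HL. apply (HL (k, component k l)), in_map_iff. eauto.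
  - apply component_absent. intro Hk. apply Hnin, nodup_In. exact Hk.
Qed.

Lemma bihomogeneous_component {r p x l} :
  ohom S r p x -> bihomogeneous l -> x = rsum (map snd l) -> x = component (r, p) l.
Proof.
  intros Hx Hl Hs.
  assert (H : component (r, p) (((r, p), (-1) \. x) :: l) = ra0).
  { apply components_of_zero.
    - constructor; auto. apply ohomZ; auto.
    - simpl. rewrite <- Hs. rewrite <- (ra_scal1 _ x) at 2.
      rewrite <- ra_scalDl. replace (-1 + 1) with 0 by ring. apply scal0l. }
  rewrite component_cons in H. cbn [fst snd] in H.
  destruct (bidegree_eq_dec (r, p) (r, p)); [|congruence].
  rewrite <- (addr0 x) at 1. rewrite <- H. lin.
Qed.

Inductive monomial : Z -> bool -> Om S -> Prop :=
| mono_fun : forall n f, zhom G n f -> monomial 0 (Z.odd n) (iota S f)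
| mono_mul : forall r p x n g, monomial r p x -> zhom G n g ->
    monomial (r + 1) (xorb p (Z.odd n)) (x \* dO S (iota S g))
| mono_scal : forall r p a x, monomial r p x -> monomial r p (a \. x).

Lemma monomial_ohom {r p x} : monomial r p x -> ohom S r p x.
Proof.
  induction 1.
  - apply iota_zhom; auto.
  - apply ohomM; auto. exact (d_hom S _ _ _ (iota_zhom H0)).
  - apply ohomZ; auto.
Qed.

Definition monomial_list (l : list (bidegree * Om S)) : Prop :=
  Forall (fun c => monomial (fst (fst c)) (snd (fst c)) (snd c)) l.

Lemma monomial_decomposition x :
  exists l, monomial_list l /\ x = rsum (map snd l).
Proof.
  induction (om_gen S x) as [n f Hf | x n g Hx [l [Hl ->]] Hg | x y Hx [l1 [Hl1 ->]] Hy [l2 [Hl2 ->]]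
                 | a x Hx [l [Hl ->]]].
  - exists (((0%Z, Z.odd n), iota S f) :: nil). split.
    + repeat constructor; auto.
    + simpl. unfold rsum; simpl. rewrite addr0. reflexivity.
  - exists (map (fun c => (((fst (fst c) + 1)%Z, xorb (snd (fst c)) (Z.odd n)),
                          snd c \* dO S (iota S g))) l). split.
    + unfold monomial_list. rewrite Forall_map. eapply Forall_impl; [|exact Hl].
      intros c Hc. constructor; auto.
    + rewrite map_map. simpl. clear Hl Hx. induction l; simpl; [apply mul0l|].
      unfold rsum in *; simpl. rewrite ra_mulDl, IHl. reflexivity.
  - exists (l1 ++ l2). split; [apply Forall_app; auto|]. rewrite map_app, rsum_app. reflexivity.
  - exists (map (fun c => (fst c, a \. snd c)) l). split.
    + unfold monomial_list. rewrite Forall_map. eapply Forall_impl; [|exact Hl].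
      intros c Hc. constructor; auto.
    + rewrite map_map. simpl. clear Hl Hx. induction l; simpl; [apply scal0r|].
      unfold rsum in *; simpl. rewrite ra_scalDr, IHl. reflexivity.
Qed.

Section Bracket.

Context {br : Om S -> Om S -> Om S} (Hg : is_gerstenhaber_superbracket S br).

Lemma br_addl x y z : br (x \+ y) z = br x z \+ br y z.
Proof. apply Hg. Qed.
Lemma br_addr x y z : br x (y \+ z) = br x y \+ br x z.
Proof. apply Hg. Qed.
Lemma br_scall a x y : br (a \. x) y = a \. br x y.
Proof. apply Hg. Qed.
Lemma br_scalr a x y : br x (a \. y) = a \. br x y.
Proof. apply Hg. Qed.
Lemma br_ohom {r p s q x y} : ohom S r p x -> ohom S s q y ->
  ohom S (r + s - 1)%Z (xorb p q) (br x y).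
Proof. apply Hg. Qed.
Lemma br_antisym {r p s q x y} : ohom S r p x -> ohom S s q y ->
  br x y = (- (sgnZ ((r - 1) * (s - 1)) * sgnB p q)) \. br y x.
Proof. apply Hg. Qed.
Lemma br_jacobi {r p s q t u x y z} :
  ohom S r p x -> ohom S s q y -> ohom S t u z ->
  br x (br y z) = br (br x y) z \+ (sgnZ ((r - 1) * (s - 1)) * sgnB p q) \. br y (br x z).
Proof. apply Hg. Qed.
Lemma br_leibniz {r p s q t u x y z} :
  ohom S r p x -> ohom S s q y -> ohom S t u z ->
  br x (y \* z) = br x y \* z \+ (sgnZ ((r - 1) * s) * sgnB p q) \. (y \* br x z).
Proof. apply Hg. Qed.

Lemma br0l y : br ra0 y = ra0.
Proof. rewrite <- (scal0l (@ra0 (Om S))) at 1. rewrite br_scall. apply scal0l. Qed.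
Lemma br0r y : br y ra0 = ra0.
Proof. rewrite <- (scal0l (@ra0 (Om S))) at 1. rewrite br_scalr. apply scal0l. Qed.

(* the bracket of two functions has form degree -1, hence vanishes *)
Lemma br_functions f g : br (iota S f) (iota S g) = ra0.
Proof.
  revert g. pattern f. apply function_ind.
  - intro g. rewrite iota0, br0l. reflexivity.
  - intros f1 f2 H1 H2 g. rewrite iotaD, br_addl, H1, H2, ra_add0l. reflexivity.
  - intros n f0 Hf g. pattern g. apply function_ind.
    + rewrite iota0, br0r. reflexivity.
    + intros g1 g2 H1 H2. rewrite iotaD, br_addr, H1, H2, ra_add0l. reflexivity.
    + intros m g0 Hg0.
      exact (ohom_neg S _ _ (br_ohom (iota_zhom Hf) (iota_zhom Hg0)) ltac:(lia)).
Qed.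

Section Backward.

Context {P : A -> A -> A} (Hassoc : bracket_associated S P br).

Definition d_compatible (r : Z) (x y : Om S) : Prop :=
  dO S (br x y) = br (dO S x) y \+ sgnZ (r - 1) \. br x (dO S y).

Lemma compat_addr r x y1 y2 :
  d_compatible r x y1 -> d_compatible r x y2 -> d_compatible r x (y1 \+ y2).
Proof. unfold d_compatible; intros H1 H2. rewrite !br_addr, !dD, !br_addr, H1, H2. lin. Qed.

Lemma compat_scalr r x a y : d_compatible r x y -> d_compatible r x (a \. y).
Proof. unfold d_compatible; intro H. rewrite !br_scalr, !dZ, !br_scalr, H. lin. Qed.

Lemma compat_0r r x : d_compatible r x ra0.
Proof. unfold d_compatible. rewrite d0, !br0r, d0. lin. Qed.

Lemma compat_addl r x1 x2 y :
  d_compatible r x1 y -> d_compatible r x2 y -> d_compatible r (x1 \+ x2) y.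
Proof. unfold d_compatible; intros H1 H2. rewrite !br_addl, !dD, !br_addl, H1, H2. lin. Qed.

Lemma compat_0l r y : d_compatible r ra0 y.
Proof. unfold d_compatible. rewrite d0, !br0l, d0. lin. Qed.

Inductive generator : Z -> bool -> Om S -> Prop :=
| gen_fun : forall {n f}, zhom G n f -> generator 0 (Z.odd n) (iota S f)
| gen_dfun : forall {n f}, zhom G n f -> generator 1 (Z.odd n) (dO S (iota S f)).

Lemma generator_ohom {r p x} : generator r p x -> ohom S r p x.
Proof. intros [n f Hf | n f Hf]; [exact (iota_zhom Hf) | exact (d_hom S _ _ _ (iota_zhom Hf))]. Qed.

(* the differential identity on pairs of generators is a rewording of the
   four identities defining the associated bracket *)
Lemma compat_generators {r p s q x y} :
  generator r p x -> generator s q y -> d_compatible r x y.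
Proof.
  unfold d_compatible.
  intros [n f _ | n f _] [m g _ | m g _]; destruct (Hassoc f g) as [E1 [E2 [E3 E4]]].
  - rewrite E1, d0, E3, E2. lin.
  - rewrite E2, E4, dd, br0r. lin.
  - rewrite E3, dd, br0l, E4. lin.
  - rewrite E4, !dd, br0l, br0r. lin.
Qed.

(* graded antisymmetry lets us swap the two slots *)
Lemma compat_swap {r p s q x y} : ohom S r p x -> ohom S s q y ->
  d_compatible s y x -> d_compatible r x y.
Proof.
  unfold d_compatible; intros Hx Hy H.
  rewrite (br_antisym Hx Hy), (br_antisym (d_hom S _ _ _ Hx) Hy),
    (br_antisym Hx (d_hom S _ _ _ Hy)), dZ, H. lin.
Qed.

(* the graded Leibniz rule propagates the identity to products *)
Lemma compat_mul {r p s1 q1 s2 q2 x y1 y2} :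
  ohom S r p x -> ohom S s1 q1 y1 -> ohom S s2 q2 y2 ->
  d_compatible r x y1 -> d_compatible r x y2 -> d_compatible r x (y1 \* y2).
Proof.
  unfold d_compatible; intros Hx H1 H2 D1 D2.
  assert (Hdx := d_hom S _ _ _ Hx). assert (Hdy1 := d_hom S _ _ _ H1).
  assert (Hdy2 := d_hom S _ _ _ H2).
  rewrite (br_leibniz Hx H1 H2), dD, dZ, (d_leib S _ _ _ _ (br_ohom Hx H1)),
    (d_leib S _ _ _ _ H1), D1, D2, (br_leibniz Hdx H1 H2), (d_leib S _ _ _ _ H1),
    br_addr, br_scalr, (br_leibniz Hx Hdy1 H2), (br_leibniz Hx H1 Hdy2).
  rewrite ?ra_mulDl, ?ra_mulDr, ?ra_scal_mull, ?ra_scal_mulr. lin.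
Qed.

Lemma compat_generator_monomial {r p s q x y} :
  generator r p x -> monomial s q y -> d_compatible r x y.
Proof.
  intros Hx Hy. induction Hy as [n g Hg0 | s q y n g Hy IH Hg0 | s q a y Hy IH].
  - exact (compat_generators Hx (gen_fun Hg0)).
  - apply (compat_mul (generator_ohom Hx) (monomial_ohom Hy)
             (generator_ohom (gen_dfun Hg0)) IH).
    exact (compat_generators Hx (gen_dfun Hg0)).
  - apply compat_scalr, IH.
Qed.

Lemma compat_monomials {r p s q x y} :
  monomial r p x -> monomial s q y -> d_compatible r x y.
Proof.
  intros Hx Hy. assert (Ox := monomial_ohom Hx).
  induction Hy as [n g Hg0 | s q y n g Hy IH Hg0 | s q a y Hy IH].
  - apply (compat_swap Ox (generator_ohom (gen_fun Hg0))).
    exact (compat_generator_monomial (gen_fun Hg0) Hx).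
  - apply (compat_mul Ox (monomial_ohom Hy) (generator_ohom (gen_dfun Hg0)) IH).
    apply (compat_swap Ox (generator_ohom (gen_dfun Hg0))).
    exact (compat_generator_monomial (gen_dfun Hg0) Hx).
  - apply compat_scalr, IH.
Qed.

Lemma compat_monomial_any {r p x} y : monomial r p x -> d_compatible r x y.
Proof.
  intro Hx. destruct (monomial_decomposition y) as [l [Hl ->]].
  induction l as [|c l IH]; simpl; [apply compat_0r|].
  inversion Hl; subst. apply compat_addr; [eapply compat_monomials; eauto | auto].
Qed.

Lemma associated_is_differential : is_differential_bracket S br.
Proof.
  intros r p x y Hx. fold (d_compatible r x y).
  destruct (monomial_decomposition x) as [l [Hl Hs]].
  assert (Hbi : bihomogeneous l).
  { eapply Forall_impl; [|exact Hl]. intros c Hc. apply monomial_ohom; auto. }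
  rewrite (bihomogeneous_component Hx Hbi Hs). clear Hs Hbi.
  induction l as [|[[r' p'] m] l IH]; [apply compat_0l|].
  rewrite component_cons. inversion Hl; subst. apply compat_addl; [|auto].
  cbn [fst snd]. destruct (bidegree_eq_dec (r', p') (r, p)) as [E|]; [|apply compat_0l].
  injection E as -> ->. eapply compat_monomial_any; eauto.
Qed.

End Backward.

(* [f, dg] has form degree 0, so it is a function *)
Lemma br_fun_dfun_function f g : exists h, iota S h = br (iota S f) (dO S (iota S g)).
Proof.
  revert g. pattern f. apply function_ind.
  - intro g. exists ra0. rewrite iota0, br0l. reflexivity.
  - intros f1 f2 H1 H2 g. destruct (H1 g) as [h1 E1], (H2 g) as [h2 E2].
    exists (h1 \+ h2). rewrite !iotaD, br_addl, E1, E2. reflexivity.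
  - intros n f0 Hf g. pattern g. apply function_ind.
    + exists ra0. rewrite iota0, d0, br0r. reflexivity.
    + intros g1 g2 [h1 E1] [h2 E2]. exists (h1 \+ h2).
      rewrite !iotaD, dD, br_addr, E1, E2. reflexivity.
    + intros m g0 Hg0.
      destruct (ohom0_function (br_ohom (iota_zhom Hf) (d_hom S _ _ _ (iota_zhom Hg0)))
                  ltac:(lia)) as [h [_ E]].
      eauto.
Qed.

Definition poisson (f g : A) : A :=
  proj1_sig (constructive_indefinite_description _ (br_fun_dfun_function f g)).

Lemma poisson_spec f g : iota S (poisson f g) = br (iota S f) (dO S (iota S g)).
Proof. exact (proj2_sig (constructive_indefinite_description _ (br_fun_dfun_function f g))). Qed.

Lemma poisson_bilinear :
  (forall f g h, poisson (f \+ g) h = poisson f h \+ poisson g h) /\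
  (forall f g h, poisson f (g \+ h) = poisson f g \+ poisson f h) /\
  (forall a f g, poisson (a \. f) g = a \. poisson f g) /\
  (forall a f g, poisson f (a \. g) = a \. poisson f g).
Proof.
  repeat split; intros; apply (iota_inj S);
    rewrite ?iotaD, ?iotaZ, !poisson_spec, ?iotaD, ?iotaZ, ?dD, ?dZ,
      ?br_addl, ?br_addr, ?br_scall, ?br_scalr; reflexivity.
Qed.

Lemma poisson_parity p q f g : parA G p f -> parA G q g -> parA G (xorb p q) (poisson f g).
Proof.
  intros Hf Hg0.
  pose proof (br_ohom (iota_ohom Hf) (d_iota_ohom Hg0)) as H. rewrite <- poisson_spec in H.
  destruct (ohom0_function H ltac:(lia)) as [h [Hh E]].
  apply (iota_inj S) in E. rewrite E. exact Hh.
Qed.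

Section Forward.

Context (Hd : is_differential_bracket S br).

(* d[f,g] = 0 gives [df,g] = [f,dg] *)
Lemma br_dfun_fun f g : br (dO S (iota S f)) (iota S g) = iota S (poisson f g).
Proof.
  rewrite poisson_spec. revert g. pattern f. apply function_ind.
  - intro g. rewrite iota0, d0, !br0l. reflexivity.
  - intros f1 f2 H1 H2 g. rewrite iotaD, dD, !br_addl, H1, H2. reflexivity.
  - intros n f0 Hf g. pose proof (Hd _ _ _ (iota S g) (iota_zhom Hf)) as H.
    rewrite br_functions, d0 in H.
    rewrite <- (addr0 (br (iota S f0) (dO S (iota S g)))), H. lin.
Qed.

(* d[df,g] = [df,dg] since dd = 0 *)
Lemma br_dfun_dfun f g : br (dO S (iota S f)) (dO S (iota S g)) = dO S (iota S (poisson f g)).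
Proof.
  rewrite <- br_dfun_fun. revert g. pattern f. apply function_ind.
  - intro g. rewrite iota0, d0, !br0l, d0. reflexivity.
  - intros f1 f2 H1 H2 g. rewrite iotaD, dD, !br_addl, H1, H2, dD. reflexivity.
  - intros n f0 Hf g. pose proof (Hd _ _ _ (iota S g) (d_hom S _ _ _ (iota_zhom Hf))) as H.
    rewrite dd, br0l in H. rewrite H. lin.
Qed.

Lemma poisson_associated : bracket_associated S poisson br.
Proof.
  intros f g. repeat split.
  - apply br_functions.
  - symmetry. apply poisson_spec.
  - apply br_dfun_fun.
  - apply br_dfun_dfun.
Qed.

(* antisymmetry of [f, dg] *)
Lemma poisson_antisym p q f g : parA G p f -> parA G q g ->
  poisson f g = (- sgnB p q) \. poisson g f.
Proof.
  intros Hf Hg0. apply (iota_inj S).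
  rewrite iotaZ, (poisson_spec f g), (br_antisym (iota_ohom Hf) (d_iota_ohom Hg0)),
    br_dfun_fun. lin.
Qed.

(* Jacobi identity for the triple (f, dg, dh) *)
Lemma poisson_jacobi p q u f g h : parA G p f -> parA G q g -> parA G u h ->
  poisson f (poisson g h) = poisson (poisson f g) h \+ sgnB p q \. poisson g (poisson f h).
Proof.
  intros Hf Hg0 Hh. apply (iota_inj S).
  rewrite iotaD, iotaZ, (poisson_spec f (poisson g h)), <- br_dfun_dfun,
    (br_jacobi (iota_ohom Hf) (d_iota_ohom Hg0) (d_iota_ohom Hh)),
    <- (poisson_spec f g), <- (poisson_spec f h), (poisson_spec (poisson f g) h),
    (br_dfun_fun g (poisson f h)).
  lin.
Qed.

(* Leibniz rule for the triple (f, dg, h) and d(gh) = dg h + g dh *)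
Lemma poisson_leibniz p q u f g h : parA G p f -> parA G q g -> parA G u h ->
  poisson f (g \* h) = poisson f g \* h \+ sgnB p q \. (g \* poisson f h).
Proof.
  intros Hf Hg0 Hh. apply (iota_inj S).
  rewrite iotaD, iotaZ, !iotaM, poisson_spec, iotaM, (d_leib S _ _ _ _ (iota_ohom Hg0)),
    br_addr, br_scalr, (br_leibniz (iota_ohom Hf) (d_iota_ohom Hg0) (iota_ohom Hh)),
    (br_leibniz (iota_ohom Hf) (iota_ohom Hg0) (d_iota_ohom Hh)),
    !br_functions, mul0r, mul0l, scal0r, <- !poisson_spec.
  lin.
Qed.

Lemma poisson_is_poisson : is_poisson_superalgebra G poisson.
Proof.
  destruct poisson_bilinear as [Hl [Hr [Hsl Hsr]]].
  repeat split; auto.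
  - apply poisson_parity.
  - apply poisson_antisym.
  - apply poisson_jacobi.
  - apply poisson_leibniz.
Qed.

End Forward.

End Bracket.

End Forms.

Theorem mainTheorem6 (A : RAlg) (G : ZGrading A) (S : SuperForms G)
    (br : Om S -> Om S -> Om S) :
  is_gerstenhaber_superbracket S br ->
  (is_differential_bracket S br <->
   exists P : A -> A -> A,
     is_poisson_superalgebra G P /\ bracket_associated S P br).
Proof.
  intro Hg. split.
  - intro Hd. exists (poisson Hg).
    split; [exact (poisson_is_poisson Hg Hd) | exact (poisson_associated Hg Hd)].
  - intros [P [_ Hassoc]]. exact (associated_is_differential Hg Hassoc).
Qed.
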